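(* Let $a\in\mathrm{Im}(\mathbb{H})$ and $b\in\mathbb{H}$ have norm one. Then the three algebras $\mathbb{H}\times\mathbb{H}_{(T_{a,\bar a}\circ\sigma_{\mathbb{H}},\,I_{\mathbb{H}})}$, $\mathbb{H}\times\mathbb{H}_{(I_{\mathbb{H}},\,-T_{b,b}\circ\sigma_{\mathbb{H}})}$ and ${}^*\mathbb{O}(i,1)$ are mutually isomorphic.
   Context: For $a,b\in\mathbb{H}$, $T_{a,b}(x)=axb$; $\sigma_{\mathbb{H}}(x)=\bar x$; $I_{\mathbb{H}}$ is the identity. $\mathbb{O}=\mathbb{H}\times\mathbb{H}$ with Cayley–Dickson product $(x,y)\bullet(u,v)=(xu-\bar v y,\ y\bar u+vx)$, conjugation $\overline{(x,y)}=(\bar x,-y)$, and $i=(i,0)$. For linear maps $f,g$ of $\mathbb{H}$, $\mathbb{H}\times\mathbb{H}_{(f,g)}$ is $\mathbb{H}\times\mathbb{H}$ with product $(x,y)\odot(u,v)=(f(x),g(y))\bullet(u,v)$. ${}^*\mathbb{O}(i,1)$ is $\mathbb{O}$ with product $x\odot y=(\bar x i)y$. *)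

From mathcomp Require Import all_boot all_order all_algebra.
From mathcomp Require Import reals.
Set Implicit Arguments. Unset Strict Implicit. Unset Printing Implicit Defensive.
Import Order.TTheory GRing.Theory Num.Theory.
Local Open Scope ring_scope.

Section Quat.
Variable R : realType.

Record quat := Quat { q0 : R; q1 : R; q2 : R; q3 : R }.

Definition qadd (x y : quat) : quat :=
  Quat (q0 x + q0 y) (q1 x + q1 y) (q2 x + q2 y) (q3 x + q3 y).
Definition qopp (x : quat) : quat := Quat (- q0 x) (- q1 x) (- q2 x) (- q3 x).
Definition qscale (c : R) (x : quat) : quat :=
  Quat (c * q0 x) (c * q1 x) (c * q2 x) (c * q3 x).
(* Hamilton product: i^2 = j^2 = k^2 = ijk = -1. *)
Definition qmul (x y : quat) : quat :=
  Quat (q0 x * q0 y - q1 x * q1 y - q2 x * q2 y - q3 x * q3 y)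
       (q0 x * q1 y + q1 x * q0 y + q2 x * q3 y - q3 x * q2 y)
       (q0 x * q2 y - q1 x * q3 y + q2 x * q0 y + q3 x * q1 y)
       (q0 x * q3 y + q1 x * q2 y - q2 x * q1 y + q3 x * q0 y).
Definition qconj (x : quat) : quat := Quat (q0 x) (- q1 x) (- q2 x) (- q3 x).
Definition qzero : quat := Quat 0 0 0 0.
Definition qi : quat := Quat 0 1 0 0.
Definition qnorm2 (x : quat) : R := q0 x ^+ 2 + q1 x ^+ 2 + q2 x ^+ 2 + q3 x ^+ 2.
Definition qIm (x : quat) : Prop := q0 x = 0.

Definition Tq (a b : quat) (x : quat) : quat := qmul (qmul a x) b.

Definition oct := (quat * quat)%type.
Definition oadd (x y : oct) : oct := (qadd x.1 y.1, qadd x.2 y.2).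
Definition oscale (c : R) (x : oct) : oct := (qscale c x.1, qscale c x.2).
(* Cayley-Dickson product (x,y).(u,v) = (xu - conj(v) y, y conj(u) + v x) *)
Definition omul (x y : oct) : oct :=
  (qadd (qmul x.1 y.1) (qopp (qmul (qconj y.2) x.2)),
   qadd (qmul x.2 (qconj y.1)) (qmul y.2 x.1)).
Definition oconj (x : oct) : oct := (qconj x.1, qopp x.2).
Definition oi : oct := (qi, qzero).

(* H x H_(f,g): (x,y) (.) (u,v) = (f x, g y) . (u,v) *)
Definition HHprod (f g : quat -> quat) (x y : oct) : oct :=
  omul (f x.1, g x.2) y.
(* *O(i,1): x (.) y = (conj(x) i) y *)
Definition starO_i1 (x y : oct) : oct := omul (omul (oconj x) oi) y.

Definition algA (a : quat) : oct -> oct -> oct :=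
  HHprod (fun x => Tq a (qconj a) (qconj x)) id.
Definition algB (b : quat) : oct -> oct -> oct :=
  HHprod id (fun y => qopp (Tq b b (qconj y))).

Definition alg_iso (m1 m2 : oct -> oct -> oct) (phi : oct -> oct) : Prop :=
  bijective phi /\
  (forall x y, phi (oadd x y) = oadd (phi x) (phi y)) /\
  (forall (c : R) x, phi (oscale c x) = oscale c (phi x)) /\
  (forall x y, phi (m1 x y) = m2 (phi x) (phi y)).

Definition alg_isomorphic (m1 m2 : oct -> oct -> oct) : Prop :=
  exists phi, alg_iso m1 m2 phi.

End Quat.

From mathcomp Require Import all_boot all_order all_algebra.
From mathcomp Require Import reals ring lra.
Set Implicit Arguments. Unset Strict Implicit. Unset Printing Implicit Defensive.
Import Order.TTheory GRing.Theory Num.Theory.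
Local Open Scope ring_scope.

(* Every algebra in the statement is carried onto *O(i,1) by an explicit
   real-linear change of variables.  A unit imaginary quaternion a is
   conjugate to i: with q = 1 - i a one has q a = a + i = i q, since a^2 = -1
   (and q = j works in the exceptional case a = -i, where 1 - i a = 0).
   Conjugating both coordinates by q carries H x H_(T_{a,ā} σ, I) onto
   H x H_(T_{i,-i} σ, I), and (x, y) |-> (x i, y) carries the latter onto
   *O(i,1).  For a unit b, (x, y) |-> (x, b̄ y) carries H x H_(I, -T_{b,b} σ)
   onto H x H_(I, -σ), which a signed permutation of the eight real
   coordinates identifies with H x H_(T_{i,-i} σ, I). *)

Notation "x ** y" := (qmul x y) (at level 40, left associativity).

Section QuaternionAlgebras.
Variable R : realType.
Implicit Types (x y z q : quat R) (c : R).

Definition qone : quat R := Quat 1 0 0 0.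
Definition qj : quat R := Quat 0 0 1 0.
Definition qsub x y : quat R := qadd x (qopp y).
Definition qinv x : quat R := qscale (qnorm2 x)^-1 (qconj x).
Definition qconjg q x : quat R := q ** x ** qinv q.

Lemma quat_eq (a b c d e f g h : R) :
  a = e -> b = f -> c = g -> d = h -> Quat a b c d = Quat e f g h.
Proof. by move=> -> -> -> ->. Qed.

Ltac quat_destruct := repeat match goal with x : quat _ |- _ =>
  let a := fresh "a" in let b := fresh "b" in
  let c := fresh "c" in let d := fresh "d" in destruct x as [a b c d] end.
Ltac quat_unfold := cbv [qconjg qinv qsub qone qj qi qzero qnorm2
  qmul qadd qopp qconj qscale q0 q1 q2 q3].
Ltac quat_ring := quat_destruct; quat_unfold; apply: quat_eq; ring.

Lemma qmulA x y z : x ** (y ** z) = x ** y ** z. Proof. quat_ring. Qed.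
Lemma qmul1r x : qone ** x = x. Proof. quat_ring. Qed.
Lemma qmulr1 x : x ** qone = x. Proof. quat_ring. Qed.
Lemma qmulDr x y z : x ** qadd y z = qadd (x ** y) (x ** z). Proof. quat_ring. Qed.
Lemma qmulNl x y : qopp x ** y = qopp (x ** y). Proof. quat_ring. Qed.
Lemma qmulNr x y : x ** qopp y = qopp (x ** y). Proof. quat_ring. Qed.
Lemma qconjK x : qconj (qconj x) = x. Proof. quat_ring. Qed.
Lemma qconjM x y : qconj (x ** y) = qconj y ** qconj x. Proof. quat_ring. Qed.
Lemma qmul_conjl x : qconj x ** x = Quat (qnorm2 x) 0 0 0. Proof. quat_ring. Qed.
Lemma qmul_conjr x : x ** qconj x = Quat (qnorm2 x) 0 0 0. Proof. quat_ring. Qed.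

Lemma qnorm2_eq0 x : qnorm2 x = 0 -> x = qzero R.
Proof.
case: x => a b c d; rewrite /qnorm2 /= => /eqP.
rewrite !paddr_eq0 ?addr_ge0 ?sqr_ge0 // !sqrf_eq0.
by case/andP=> /andP[/andP[/eqP-> /eqP->] /eqP->] /eqP->.
Qed.

Lemma qmulV x : qnorm2 x != 0 -> x ** qinv x = qone.
Proof.
case: x => a b c d; rewrite /qnorm2 /= => hN.
by quat_unfold; apply: quat_eq; field.
Qed.

Lemma qmulVr x : qnorm2 x != 0 -> qinv x ** x = qone.
Proof.
case: x => a b c d; rewrite /qnorm2 /= => hN.
by quat_unfold; apply: quat_eq; field.
Qed.

Lemma qnorm2_inv x : qnorm2 x != 0 -> qnorm2 (qinv x) = (qnorm2 x)^-1.
Proof. by case: x => a b c d; rewrite /qnorm2 /= => hN; quat_unfold; field. Qed.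

Lemma qinvK x : qnorm2 x != 0 -> qinv (qinv x) = x.
Proof.
case: x => a b c d; rewrite /qnorm2 /= => hN.
by quat_unfold; apply: quat_eq; field.
Qed.

Lemma qconjgK q : qnorm2 q != 0 -> cancel (qconjg q) (qconjg (qinv q)).
Proof.
move=> hq x; rewrite /qconjg qinvK // -!qmulA qmulVr // qmulr1.
by rewrite qmulA qmulVr // qmul1r.
Qed.

Lemma qconjgKV q : qnorm2 q != 0 -> cancel (qconjg (qinv q)) (qconjg q).
Proof.
move=> hq; have hq' : qnorm2 (qinv q) != 0 by rewrite qnorm2_inv // invr_eq0.
by move: (qconjgK hq'); rewrite qinvK.
Qed.

Lemma qconjg_add q x y : qconjg q (qadd x y) = qadd (qconjg q x) (qconjg q y).
Proof. quat_ring. Qed.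
Lemma qconjg_opp q x : qconjg q (qopp x) = qopp (qconjg q x).
Proof. quat_ring. Qed.
Lemma qconjg_conj q x : qconjg q (qconj x) = qconj (qconjg q x).
Proof. quat_ring. Qed.

Lemma qconjg_mul q x y : qnorm2 q != 0 ->
  qconjg q (x ** y) = qconjg q x ** qconjg q y.
Proof.
by move=> hq; rewrite /qconjg -!qmulA (qmulA (qinv q) q) qmulVr // qmul1r.
Qed.

Lemma qconjg_intertwine q x y : qnorm2 q != 0 -> q ** x = y ** q ->
  qconjg q x = y.
Proof. by move=> hq hxy; rewrite /qconjg hxy -qmulA qmulV // qmulr1. Qed.

Lemma Im_unit_conjg_qi a : qIm a -> qnorm2 a = 1 ->
  exists2 q, qnorm2 q != 0 & qconjg q a = qi R.
Proof.
case: a => a0 a1 a2 a3; rewrite /qIm /= => -> ha.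
have [q0|qN0] := eqVneq (qnorm2 (qsub qone (qi R ** Quat 0 a1 a2 a3))) 0.
  have [-> -> ->] : [/\ a1 = -1, a2 = 0 & a3 = 0].
    by move/qnorm2_eq0: q0; quat_unfold; case=> *; split; lra.
  have jN0 : qnorm2 qj != 0 by rewrite /qnorm2 /=; lra.
  exists qj => //; apply: qconjg_intertwine => //.
  by quat_unfold; apply: quat_eq; ring.
exists (qsub qone (qi R ** Quat 0 a1 a2 a3)) => //.
apply: qconjg_intertwine => //.
by rewrite /qnorm2 /= in ha; quat_unfold; apply: quat_eq; lra.
Qed.

Implicit Types m : oct R -> oct R -> oct R.

Lemma alg_iso_comp m1 m2 m3 f g :
  alg_iso m1 m2 f -> alg_iso m2 m3 g -> alg_iso m1 m3 (g \o f).
Proof.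
move=> [bf [af [sf mf]]] [bg [ag [sg mg]]]; split; last split; last split.
- exact: bij_comp.
- by move=> x y /=; rewrite af ag.
- by move=> c x /=; rewrite sf sg.
- by move=> x y /=; rewrite mf mg.
Qed.

Lemma alg_isomorphic_sym m1 m2 : alg_isomorphic m1 m2 -> alg_isomorphic m2 m1.
Proof.
move=> [f [[g fK gK] [af [sf mf]]]]; exists g; split; last split; last split.
- by exists f.
- by move=> x y; apply: (can_inj fK); rewrite af !gK.
- by move=> c x; apply: (can_inj fK); rewrite sf !gK.
- by move=> x y; apply: (can_inj fK); rewrite mf !gK.
Qed.

Lemma alg_isomorphic_trans m1 m2 m3 :
  alg_isomorphic m1 m2 -> alg_isomorphic m2 m3 -> alg_isomorphic m1 m3.
Proof. by move=> [f hf] [g hg]; exists (g \o f); apply: alg_iso_comp hf hg. Qed.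

Implicit Types (p : oct R) (u : quat R).

Definition mulr_fst u p : oct R := (p.1 ** u, p.2).
Definition mull_snd u p : oct R := (p.1, u ** p.2).
Definition oconjg q p : oct R := (qconjg q p.1, qconjg q p.2).
Definition osignperm p : oct R :=
  (Quat (q0 p.1) (q0 p.2) (q2 p.1) (- q2 p.2),
   Quat (q1 p.1) (- q1 p.2) (- q3 p.1) (- q3 p.2)).

Lemma oct_eq p p' : p.1 = p'.1 -> p.2 = p'.2 -> p = p'.
Proof. by case: p p' => ? ? [? ?] /= -> ->. Qed.

Ltac oct_unfold := cbv [mulr_fst mull_snd oconjg osignperm
  algA algB HHprod starO_i1 omul oconj oi oadd oscale Tq fst snd].
Ltac oct_ring := apply: oct_eq; oct_unfold; quat_ring.

Lemma qunit_conjl u : qnorm2 u = 1 -> qconj u ** u = qone.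
Proof. by move=> hu; rewrite qmul_conjl hu. Qed.

Lemma qunit_conjr u : qnorm2 u = 1 -> u ** qconj u = qone.
Proof. by move=> hu; rewrite qmul_conjr hu. Qed.

Lemma qnorm2_qi : qnorm2 (qi R) = 1.
Proof. by rewrite /qnorm2 /=; ring. Qed.

Lemma mulr_fst_iso : alg_iso (algA (qi R)) (@starO_i1 R) (mulr_fst (qi R)).
Proof.
split; last split; last split.
- exists (mulr_fst (qconj (qi R))) => -[x y]; apply: oct_eq => //=.
    by rewrite -qmulA qunit_conjr ?qnorm2_qi // qmulr1.
  by rewrite -qmulA qunit_conjl ?qnorm2_qi // qmulr1.
- by move=> [x y] [x' y']; oct_ring.
- by move=> c [x y]; oct_ring.
- by move=> [x y] [x' y']; oct_ring.
Qed.

Lemma osignperm_iso : alg_iso (algB qone) (algA (qi R)) osignperm.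
Proof.
split; last split; last split.
- by exists osignperm => -[x y]; oct_ring.
- by move=> [x y] [x' y']; oct_ring.
- by move=> c [x y]; oct_ring.
- by move=> [x y] [x' y']; oct_ring.
Qed.

Lemma mull_snd_iso u : qnorm2 u = 1 ->
  alg_iso (algB u) (algB qone) (mull_snd (qconj u)).
Proof.
move=> hu; split; last split; last split.
- exists (mull_snd u) => -[x y]; apply: oct_eq => //=.
    by rewrite qmulA qunit_conjr // qmul1r.
  by rewrite qmulA qunit_conjl // qmul1r.
- by move=> [x y] [x' y']; oct_ring.
- by move=> c [x y]; oct_ring.
- move=> [x y] [x' y']; apply: oct_eq; oct_unfold; first by quat_ring.
  rewrite qmulDr !qmulNl qmulNr !qmulA qunit_conjl // !qmul1r qmulr1.
  by rewrite qconjM qconjK.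
Qed.

Lemma oconjg_iso a q : qnorm2 q != 0 -> qconjg q a = qi R ->
  alg_iso (algA a) (algA (qi R)) (oconjg q).
Proof.
move=> hq ha; split; last split; last split.
- exists (oconjg (qinv q)) => -[x y]; apply: oct_eq; cbv [oconjg fst snd];
    by rewrite ?qconjgK ?qconjgKV.
- by move=> [x y] [x' y']; oct_ring.
- by move=> c [x y]; oct_ring.
- move=> [x y] [x' y']; oct_unfold.
  by rewrite !(qconjg_add, qconjg_opp, qconjg_mul _ _ hq, qconjg_conj) ha.
Qed.

End QuaternionAlgebras.

Theorem corollary5 (R : realType) (a b : quat R) :
  qIm a -> qnorm2 a = 1 -> qnorm2 b = 1 ->
  alg_isomorphic (algA a) (algB b) /\
  alg_isomorphic (algB b) (@starO_i1 R) /\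
  alg_isomorphic (algA a) (@starO_i1 R).
Proof.
move=> a_Im a_unit b_unit.
have isoB : alg_isomorphic (algB b) (@starO_i1 R).
  exists (mulr_fst (qi R) \o @osignperm R \o mull_snd (qconj b)).
  apply: alg_iso_comp (mulr_fst_iso R).
  exact: alg_iso_comp (mull_snd_iso b_unit) (osignperm_iso R).
have isoA : alg_isomorphic (algA a) (@starO_i1 R).
  have [q qN0 qaq] := Im_unit_conjg_qi a_Im a_unit.
  exists (mulr_fst (qi R) \o oconjg q).
  exact: alg_iso_comp (oconjg_iso qN0 qaq) (mulr_fst_iso R).
split; last by split.
exact: alg_isomorphic_trans isoA (alg_isomorphic_sym isoB).
Qed.
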